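(* Let $\mathbb F_2^+$ be the free monoid on $\{a,b\}$ and $\mathbb N$ the additive monoid, both regarded as one-object categories. Define a left action of $\mathbb F_2^+$ on $\mathbb N$ by $w\triangleright n=n$, and a right action of $\mathbb N$ on $\mathbb F_2^+$ by $w\triangleleft 0=w$ and $w\triangleleft n=a^{|w|}$ for $n\ge1$ (where $|w|$ is word length). Then $(\mathbb F_2^+,\mathbb N)$ is a matched pair, the Zappa–Szép product $\mathcal X=\mathbb N\bowtie\mathbb F_2^+$ is a finitely aligned left-cancellative monoid, the inclusion $\mathbb F_2^+\hookrightarrow\mathcal X$ is not concordant, and there is no $*$-homomorphism $\Phi:\mathcal TC^*(\mathbb F_2^+,1)\to\mathcal TC^*(\mathcal X,1)$ with $\Phi(t^{\mathbb F_2^+}_w)=t^{\mathcal X}_w$ for all $w\in\mathbb F_2^+$.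
   Context: A matched pair $(\mathcal C,\mathcal D)$ of small categories with $\mathcal C^0=\mathcal D^0$ consists of a left action $c\triangleright d\in\mathcal D$ of $\mathcal C$ on $\mathcal D$ and a right action $c\triangleleft d\in\mathcal C$ of $\mathcal D$ on $\mathcal C$ (defined when $s(c)=r(d)$) such that $s(c\triangleright d)=r(c\triangleleft d)$, $c\triangleright(d_1d_2)=(c\triangleright d_1)((c\triangleleft d_1)\triangleright d_2)$ and $(c_1c_2)\triangleleft d=(c_1\triangleleft(c_2\triangleright d))(c_2\triangleleft d)$. The Zappa–Szép product $\mathcal D\bowtie\mathcal C$ has morphisms $dc$ ($d\in\mathcal D$, $c\in\mathcal C$) with product $d_1c_1\,d_2c_2=d_1(c_1\triangleright d_2)(c_1\triangleleft d_2)c_2$; it contains $\mathcal C$ and $\mathcal D$. Left-cancellative: $xy=xz\Rightarrow y=z$; finitely aligned: for all $x,y$ there is finite $F$ with $x\mathcal X\cap y\mathcal X=\bigcup_{c\in F}c\mathcal X$; independent $F$: $a\notin a'\mathcal X$ for distinct $a,a'\in F$. A subcategory $\mathcal C\subseteq\mathcal X$ is concordant if for all $c_1,c_2\in\mathcal C$ with $c_1\mathcal X\cap c_2\mathcal X\neq\emptyset$ there is a finite independent $F\subseteq\mathcal C$ with $c_1\mathcal C\cap c_2\mathcal C=F\mathcal C$ such that whenever $c_1x_1=c_2x_2$ in $\mathcal X$, there exist $a_1,a_2$ with $c_1a_1=c_2a_2\in F$ and $y\in\mathcal X$ with $x_i=a_iy$. $\mathcal TC^*(\mathcal C,1)$ is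 the universal $C^*$-algebra generated by partial isometries $t_c$, $c\in\mathcal C$, with $t_{c_1}t_{c_2}=t_{c_1c_2}$ (composable), $t_c^*t_c=t_{s(c)}$, and $t_{c_1}t_{c_1}^*t_{c_2}t_{c_2}^*=\bigvee_{c\in F}t_ct_c^*$ for every finite independent $F$ with $c_1\mathcal C\cap c_2\mathcal C=\bigcup_{c\in F}c\mathcal C$ (this product is $0$ if the intersection is empty); $\bigvee$ = supremum of commuting projections. *)

From HB Require Import structures.
From mathcomp Require Import all_boot all_order all_algebra.
From mathcomp Require Import complex.
From mathcomp Require Import Rstruct.
Set Implicit Arguments. Unset Strict Implicit. Unset Printing Implicit Defensive.
Import GRing.Theory Num.Theory.
Local Open Scope ring_scope.

Definition RR := Rdefinitions.R.
Definition CC := complex RR.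
Definition cabs (z : CC) : RR :=
  let: Complex a b := z in Num.sqrt (a ^+ 2 + b ^+ 2).

Record CstarAlg := {
  ca_car :> lmodType CC;
  ca_mul : ca_car -> ca_car -> ca_car;
  ca_star : ca_car -> ca_car;
  ca_norm : ca_car -> RR;
  ca_mulA : forall x y z, ca_mul x (ca_mul y z) = ca_mul (ca_mul x y) z;
  ca_mul_linl : forall (a : CC) x y z,
      ca_mul (a *: x + y) z = a *: ca_mul x z + ca_mul y z;
  ca_mul_linr : forall (a : CC) x y z,
      ca_mul z (a *: x + y) = a *: ca_mul z x + ca_mul z y;
  ca_star_antilin : forall (a : CC) x y,
      ca_star (a *: x + y) = (a^*)%C *: ca_star x + ca_star y;
  ca_starK : forall x, ca_star (ca_star x) = x;
  ca_star_mul : forall x y, ca_star (ca_mul x y) = ca_mul (ca_star y) (ca_star x);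
  ca_norm_eq0 : forall x, ca_norm x = 0 -> x = 0;
  ca_normD : forall x y, ca_norm (x + y) <= ca_norm x + ca_norm y;
  ca_normZ : forall (a : CC) x, ca_norm (a *: x) = cabs a * ca_norm x;
  ca_normM : forall x y, ca_norm (ca_mul x y) <= ca_norm x * ca_norm y;
  ca_cstar : forall x, ca_norm (ca_mul (ca_star x) x) = ca_norm x ^+ 2;
  ca_complete : forall u : nat -> ca_car,
      (forall eps : RR, 0 < eps -> exists N, forall m n, (N <= m)%N -> (N <= n)%N ->
          ca_norm (u m - u n) < eps) ->
      exists l, forall eps : RR, 0 < eps -> exists N, forall n, (N <= n)%N ->
          ca_norm (u n - l) < eps
}.

Definition is_star_hom (A B : CstarAlg) (phi : A -> B) : Prop :=
  (forall (a : CC) x y, phi (a *: x + y) = a *: phi x + phi y) /\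
  (forall x y, phi (ca_mul x y) = ca_mul (phi x) (phi y)) /\
  (forall x, phi (ca_star x) = ca_star (phi x)).

(* supremum of (commuting) projections: p \/ q = p + q - pq, iterated
   over a finite list; the empty supremum is 0 *)
Definition pjoin (A : CstarAlg) (p q : A) : A := p + q - ca_mul p q.
Definition bigjoin (A : CstarAlg) (l : list A) : A := foldr (@pjoin A) 0 l.

(* Monoids (= one-object small categories), given by mul and unit      *)
Definition is_monoid (M : Type) (mul : M -> M -> M) (e : M) : Prop :=
  (forall x y z, mul x (mul y z) = mul (mul x y) z) /\
  (forall x, mul e x = x) /\ (forall x, mul x e = x).

Definition left_cancellative (M : Type) (mul : M -> M -> M) : Prop :=
  forall x y z, mul x y = mul x z -> y = z.

Definition in_rideal (M : Type) (mul : M -> M -> M) (x z : M) : Prop :=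
  exists u, z = mul x u.

Definition finitely_aligned (M : Type) (mul : M -> M -> M) : Prop :=
  forall x y, exists F : list M, forall z,
    (in_rideal mul x z /\ in_rideal mul y z) <->
    (exists c, List.In c F /\ in_rideal mul c z).

Definition independent (M : Type) (mul : M -> M -> M) (F : list M) : Prop :=
  forall a a', List.In a F -> List.In a' F -> a <> a' -> ~ in_rideal mul a' a.

(* lact c d = c |> d (in D),  ract c d = c <| d (in C)                 *)
Definition matched_pair (C D : Type) (mulC : C -> C -> C) (eC : C)
    (mulD : D -> D -> D) (eD : D)
    (lact : C -> D -> D) (ract : C -> D -> C) : Prop :=
  (forall d, lact eC d = d) /\
  (forall c1 c2 d, lact (mulC c1 c2) d = lact c1 (lact c2 d)) /\
  (forall c, ract c eD = c) /\
  (forall c d1 d2, ract c (mulD d1 d2) = ract (ract c d1) d2) /\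
  (* identities are preserved (r(c |> d) = r(c), s(c <| d) = s(d)) *)
  (forall c, lact c eD = eD) /\
  (forall d, ract eC d = eC) /\
  (forall c d1 d2, lact c (mulD d1 d2) = mulD (lact c d1) (lact (ract c d1) d2)) /\
  (forall c1 c2 d, ract (mulC c1 c2) d = mulC (ract c1 (lact c2 d)) (ract c2 d)).

(* Zappa-Szep product D |><| C: the element d c is the pair (d, c) and
   (d1 c1)(d2 c2) = d1 (c1 |> d2) (c1 <| d2) c2 *)
Definition zs_mul (C D : Type) (mulC : C -> C -> C) (mulD : D -> D -> D)
    (lact : C -> D -> D) (ract : C -> D -> C) (x y : D * C) : D * C :=
  (mulD x.1 (lact x.2 y.1), mulC (ract x.2 y.1) y.2).
Definition zs_unit (C D : Type) (eC : C) (eD : D) : D * C := (eD, eC).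
Definition zs_inclC (C D : Type) (eD : D) (c : C) : D * C := (eD, c).

Definition concordant (C X : Type) (mulC : C -> C -> C) (mulX : X -> X -> X)
    (iota : C -> X) : Prop :=
  forall c1 c2 : C,
    (exists x1 x2, mulX (iota c1) x1 = mulX (iota c2) x2) ->
    exists F : list C,
      (forall a a', List.In a F -> List.In a' F -> a <> a' ->
          ~ in_rideal mulX (iota a') (iota a)) /\
      (forall c, (in_rideal mulC c1 c /\ in_rideal mulC c2 c) <->
                 (exists f, List.In f F /\ in_rideal mulC f c)) /\
      (forall x1 x2, mulX (iota c1) x1 = mulX (iota c2) x2 ->
         exists a1 a2, mulC c1 a1 = mulC c2 a2 /\ List.In (mulC c1 a1) F /\
           exists y, x1 = mulX (iota a1) y /\ x2 = mulX (iota a2) y).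

Definition is_TC_rep (M : Type) (mul : M -> M -> M) (e : M)
    (A : CstarAlg) (t : M -> A) : Prop :=
  (forall c1 c2, ca_mul (t c1) (t c2) = t (mul c1 c2)) /\
  (forall c, ca_mul (ca_star (t c)) (t c) = t e) /\
  (forall c1 c2 (F : list M),
     independent mul F ->
     (forall c, (in_rideal mul c1 c /\ in_rideal mul c2 c) <->
                (exists f, List.In f F /\ in_rideal mul f c)) ->
     let q := fun c => ca_mul (t c) (ca_star (t c)) in
     (forall f g, List.In f F -> List.In g F -> ca_mul (q f) (q g) = ca_mul (q g) (q f)) /\
     ca_mul (q c1) (q c2) = bigjoin (map q F)).

Definition is_universal_TC (M : Type) (mul : M -> M -> M) (e : M)
    (A : CstarAlg) (t : M -> A) : Prop :=
  is_TC_rep mul e t /\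
  forall (B : CstarAlg) (s : M -> B), is_TC_rep mul e s ->
    (exists phi : A -> B, is_star_hom phi /\ forall m, phi (t m) = s m) /\
    (forall phi1 phi2 : A -> B,
        is_star_hom phi1 -> (forall m, phi1 (t m) = s m) ->
        is_star_hom phi2 -> (forall m, phi2 (t m) = s m) ->
        forall x, phi1 x = phi2 x).

(* F2+ : free monoid on {a, b}; a letter is a bool, a = true, b = false *)
Definition F2p := seq bool.
Definition la : bool := true.
Definition lb : bool := false.
Definition F2mul (u v : F2p) : F2p := u ++ v.
Definition F2e : F2p := [::].
Definition Nmul (m n : nat) : nat := (m + n)%N.
Definition Ne : nat := 0%N.
Definition ex_lact (w : F2p) (n : nat) : nat := n.
Definition ex_ract (w : F2p) (n : nat) : F2p :=
  if n is 0%N then w else nseq (size w) la.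

Definition Xt := (nat * F2p)%type.
Definition Xmul : Xt -> Xt -> Xt := zs_mul F2mul Nmul ex_lact ex_ract.
Definition Xe : Xt := zs_unit F2e Ne.
Definition Xincl : F2p -> Xt := zs_inclC Ne.

From Stdlib Require Import Reals Classical.
From HB Require Import structures.
From mathcomp Require Import all_boot all_order all_algebra.
From mathcomp Require Import complex.
From mathcomp Require Import Rstruct.
From mathcomp Require Import ring lra.
Import Order.TTheory GRing.Theory Num.Theory.

(* In X the letters a and b have the common right multiple
   a (1, e) = (1, a) = b (1, e), although a F2+ and b F2+ are disjoint.
   This common multiple witnesses non-concordance.  In TC*(F2+, 1) the range
   projections of t_a and t_b are orthogonal; a *-homomorphism would carry this
   to TC*(X, 1) and force t_(1, e) = 0.  But any two principal right ideals of X
   meet, so the constant map 1 into C is a Toeplitz representation of X and no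
   universal generator vanishes. *)

Set Implicit Arguments.
Unset Strict Implicit.
Unset Printing Implicit Defensive.

Lemma ex_ract_cat (u v : F2p) k : ex_ract (u ++ v) k = ex_ract u k ++ ex_ract v k.
Proof. by case: k => //= k; rewrite size_cat nseqD. Qed.

Lemma ex_ract_ract (u : F2p) n k : ex_ract (ex_ract u n) k = ex_ract u (n + k).
Proof. by case: n => [|n] //; case: k => [|k] //=; rewrite size_nseq. Qed.

Lemma ex_ract_nseq k n : ex_ract (nseq k la) n = nseq k la.
Proof. by case: n => //= n; rewrite size_nseq. Qed.

Lemma matched_pair_F2_N : matched_pair F2mul F2e Nmul Ne ex_lact ex_ract.
Proof.
do 3!split=> //; split; first by move=> c d1 d2; rewrite -ex_ract_ract.
split=> //; split; first by case.
by split=> // c1 c2 d; rewrite /F2mul ex_ract_cat.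
Qed.

Lemma XmulE m u n v : Xmul (m, u) (n, v) = ((m + n)%N, ex_ract u n ++ v).
Proof. by []. Qed.

Lemma XmulA x y z : Xmul x (Xmul y z) = Xmul (Xmul x y) z.
Proof.
case: x => m u; case: y => n v; case: z => k w.
by rewrite !XmulE addnA ex_ract_cat ex_ract_ract catA.
Qed.

Lemma Xmonoid : is_monoid Xmul Xe.
Proof.
split; first exact: XmulA.
split; case=> m u; rewrite /Xe /zs_unit XmulE; last by rewrite addn0 cats0.
by case: m.
Qed.

Lemma Xleft_cancellative : left_cancellative Xmul.
Proof.
case=> m u [n v] [n' v']; rewrite !XmulE => -[/addnI eq_n].
by subst n'; move/(congr1 (drop (size (ex_ract u n)))); rewrite !drop_size_cat // => ->.
Qed.

(* Above level m the ideal (m, u) X only remembers the length of u. *)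
Lemma in_ridealXP m u p w :
  in_rideal Xmul (m, u) (p, w) <-> (m <= p)%N /\ prefix (ex_ract u (p - m)) w.
Proof.
split=> [[[k r]] | [le_mp /prefixP [r ->]]].
  by rewrite XmulE => -[-> ->]; rewrite leq_addr addKn prefix_prefix.
by exists ((p - m)%N, r); rewrite XmulE subnKC.
Qed.

Lemma in_rideal_trans (M : Type) (mul : M -> M -> M) :
  (forall x y z, mul x (mul y z) = mul (mul x y) z) ->
  forall x y z, in_rideal mul x y -> in_rideal mul y z -> in_rideal mul x z.
Proof. by move=> mulA x y z [a ->] [b ->]; exists (mul a b); rewrite mulA. Qed.

Lemma finitely_aligned_of_candidates (M : eqType) (mul : M -> M -> M)
    (I : M -> Prop) (cands : seq M) :
  (forall c z, I c -> in_rideal mul c z -> I z) ->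
  (forall z, I z -> exists2 c, c \in cands & I c /\ in_rideal mul c z) ->
  exists F : list M, forall z, I z <-> exists c, List.In c F /\ in_rideal mul c z.
Proof.
move=> I_up I_cands.
suff [F [FI candsF]] : exists F : list M, (forall c, List.In c F -> I c) /\
    forall c, c \in cands -> I c -> List.In c F.
  exists F => z; split=> [/I_cands [c /candsF Fc [Ic cz]] | [c [/FI Ic cz]]].
    by exists c; split; first exact: Fc.
  exact: I_up cz.
elim: cands {I_cands} => [|c cs [F [FI csF]]]; first by exists [::].
have [Ic | nIc] := classic (I c).
  exists (c :: F); split=> [d /= [<- // | /FI //] | d].
  by rewrite in_cons => /orP [/eqP -> _ | /csF dF /dF]; [left | right].
exists F; split=> // d; rewrite in_cons => /orP [/eqP -> // | /csF //].
Qed.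

Lemma prefix_common (T : eqType) (s1 s2 w : seq T) : prefix s1 w -> prefix s2 w ->
  exists2 s, s \in [:: s1; s2] & [/\ prefix s1 s, prefix s2 s & prefix s w].
Proof.
wlog le_s12 : s1 s2 / (size s1 <= size s2)%N => [hwlog p1 p2 | p1 p2].
  case: (leqP (size s1) (size s2)) => [le | /ltnW le]; first exact: hwlog.
  have [s s_in [? ? ?]] := hwlog _ _ le p2 p1.
  by exists s; [move: s_in; rewrite !inE orbC | split].
exists s2; first by rewrite !inE eqxx orbT.
split=> //; last exact: prefix_refl.
move: p1 p2; rewrite !prefixE => /eqP e1 /eqP e2.
by rewrite -{1}e2 take_takel // e1.
Qed.

Lemma ex_ract_gt0 (u : F2p) k : (0 < k)%N -> ex_ract u k = nseq (size u) la.
Proof. by case: k. Qed.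

Lemma prefix_nseq (T : eqType) (x : T) i j : (i <= j)%N -> prefix (nseq i x) (nseq j x).
Proof. by move=> le_ij; rewrite prefixE size_nseq take_nseq. Qed.

(* A common multiple of (m, u) and (n, v) at a level above max m n lies above
   the common multiple at level (max m n).+1, so these generate the meet. *)
Definition Xmeet_candidates m (u : F2p) n (v : F2p) : seq Xt :=
  let k := maxn m n in
  [:: (k, u); (k, v); (k, nseq (size u) la); (k, nseq (size v) la);
      (k.+1, nseq (maxn (size u) (size v)) la)].

Lemma Xmeet_candidate m u n v z :
  in_rideal Xmul (m, u) z -> in_rideal Xmul (n, v) z ->
  exists2 c, c \in Xmeet_candidates m u n v &
    [/\ in_rideal Xmul (m, u) c, in_rideal Xmul (n, v) c & in_rideal Xmul c z].
Proof.
case: z => p w /in_ridealXP [le_mp pu] /in_ridealXP [le_np pv].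
have le_mk : (m <= maxn m n)%N := leq_maxl m n.
have le_nk : (n <= maxn m n)%N := leq_maxr m n.
have : (maxn m n <= p)%N by rewrite geq_max le_mp le_np.
rewrite leq_eqVlt => /orP [/eqP eq_kp | lt_kp].
  subst p; have [s s_in [us vs sw]] := prefix_common pu pv.
  exists (maxn m n, s); last by split; apply/in_ridealXP; rewrite ?subnn.
  move: s_in; rewrite !inE.
  by case: (_ - m)%N => [|?]; case: (_ - n)%N => [|?] /= /orP [] /eqP ->;
    rewrite eqxx ?orbT.
rewrite !ex_ract_gt0 ?subn_gt0 ?(leq_ltn_trans _ lt_kp) // in pu pv.
exists ((maxn m n).+1, nseq (maxn (size u) (size v)) la); first by rewrite !inE eqxx !orbT.
split; apply/in_ridealXP; split; rewrite ?ex_ract_nseq ?ex_ract_gt0 ?subn_gt0 ?ltnS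
  ?prefix_nseq ?leq_maxl ?leq_maxr ?(leqW le_mk) ?(leqW le_nk) //.
by case: (leqP (size u) (size v)).
Qed.

Lemma Xfinitely_aligned : finitely_aligned Xmul.
Proof.
case=> m u [n v]; apply: (@finitely_aligned_of_candidates _ _ _ (Xmeet_candidates m u n v)).
  by move=> c z [xc yc] cz; split; apply: in_rideal_trans XmulA _ _ _ _ cz.
by move=> z [xz yz]; have [c c_in [xc yc cz]] := Xmeet_candidate xz yz; exists c.
Qed.

Lemma F2_letters_disjoint z :
  ~ (in_rideal F2mul [:: la] z /\ in_rideal F2mul [:: lb] z).
Proof. by case=> [[r1 ->] [r2 []]]. Qed.

Lemma Xnot_concordant : ~ concordant F2mul Xmul Xincl.
Proof.
move=> conc; have [|F [_ [_ conc_split]]] := conc [:: la] [:: lb].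
  by exists (1%N, [::]), (1%N, [::]).
have [//|a1 [a2 [eq_a _]]] := conc_split (1%N, [::]) (1%N, [::]).
by apply: (@F2_letters_disjoint (F2mul [:: lb] a2)); split; [exists a1 | exists a2].
Qed.

Lemma Xideals_meet x y : exists z, in_rideal Xmul x z /\ in_rideal Xmul y z.
Proof.
case: x y => m u [n v]; exists ((m + n).+1, nseq (size u + size v) la).
by split; apply/in_ridealXP; rewrite ex_ract_gt0 ?subn_gt0 ?ltnS ?leq_addr ?leq_addl //;
  rewrite prefix_nseq ?leqW ?leq_addr ?leq_addl.
Qed.

Section CstarAlgebras.
Local Open Scope ring_scope.

Lemma cabsE (z : CC) : cabs z = Num.sqrt (complex.Re z ^+ 2 + complex.Im z ^+ 2).
Proof. by case: z. Qed.

Lemma normc_cabs (z : CC) : `|z| = (cabs z)%:C%C.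
Proof. by rewrite normc_def cabsE. Qed.

Lemma cabsD (x y : CC) : cabs (x + y) <= cabs x + cabs y.
Proof. by have := ler_normD x y; rewrite !normc_cabs -rmorphD lecR. Qed.

Lemma cabsM (x y : CC) : cabs (x * y) = cabs x * cabs y.
Proof. by have := normrM x y; rewrite !normc_cabs -rmorphM => -[]. Qed.

Lemma cabs_eq0 (x : CC) : cabs x = 0 -> x = 0.
Proof. by move=> x0; apply/eqP; rewrite -normr_eq0 normc_cabs x0. Qed.

Lemma cabs_conjM (x : CC) : cabs ((x^*)%C * x) = cabs x ^+ 2.
Proof.
case: x => a b /=.
have -> : a * a - - b * b = a ^+ 2 + b ^+ 2 by ring.
have -> : a * b + - b * a = 0 by ring.
have ab_ge0 : 0 <= a ^+ 2 + b ^+ 2 by rewrite addr_ge0 // sqr_ge0.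
by rewrite expr0n /= addr0 sqrtr_sqr sqr_sqrtr // ger0_norm.
Qed.

Lemma normr_Re_le_cabs (z : CC) : `|complex.Re z| <= cabs z.
Proof. by rewrite cabsE -sqrtr_sqr ler_wsqrtr // lerDl sqr_ge0. Qed.

Lemma normr_Im_le_cabs (z : CC) : `|complex.Im z| <= cabs z.
Proof. by rewrite cabsE -sqrtr_sqr ler_wsqrtr // lerDr sqr_ge0. Qed.

Lemma cabs_le_normr_ReIm (z : CC) : cabs z <= `|complex.Re z| + `|complex.Im z|.
Proof.
rewrite cabsE; set a := complex.Re z; set b := complex.Im z.
have le_sq : a ^+ 2 + b ^+ 2 <= (`|a| + `|b|) ^+ 2.
  have ab_ge0 : 0 <= `|a| * `|b| by rewrite mulr_ge0.
  rewrite sqrrD !real_normK ?num_real //; lra.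
by have := ler_wsqrtr le_sq; rewrite sqrtr_sqr ger0_norm // addr_ge0.
Qed.

Lemma ReB (x y : CC) : complex.Re (x - y) = complex.Re x - complex.Re y.
Proof. by case: x; case: y. Qed.

Lemma ImB (x y : CC) : complex.Im (x - y) = complex.Im x - complex.Im y.
Proof. by case: x; case: y. Qed.

Definition cauchy_seq (T : zmodType) (N : T -> RR) (u : nat -> T) : Prop :=
  forall eps : RR, 0 < eps -> exists K, forall m n, (K <= m)%N -> (K <= n)%N ->
    N (u m - u n) < eps.

Definition converges_to (T : zmodType) (N : T -> RR) (u : nat -> T) (l : T) : Prop :=
  forall eps : RR, 0 < eps -> exists K, forall n, (K <= n)%N -> N (u n - l) < eps.

Lemma cauchy_additive_dominated (f : CC -> RR) (u : nat -> CC) :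
  (forall z, `|f z| <= cabs z) -> (forall x y, f (x - y) = f x - f y) ->
  cauchy_seq cabs u -> exists l, converges_to Num.norm (f \o u) l.
Proof.
move=> f_le fB u_cauchy.
have : Cauchy_crit (f \o u).
  move=> eps /RltP eps_gt0; have [K uK] := u_cauchy eps eps_gt0.
  exists K => n m /ssrnat.leP Kn /ssrnat.leP Km; apply/RltP; rewrite RdistE -fB.
  exact: le_lt_trans (f_le _) (uK _ _ Kn Km).
case/R_complete=> l ul; exists l => eps /RltP eps_gt0.
have [K uK] := ul eps eps_gt0.
by exists K => n /ssrnat.leP /uK; rewrite RdistE => /RltP.
Qed.

Lemma CC_complete (u : nat -> CC) :
  cauchy_seq cabs u -> exists l, converges_to cabs u l.
Proof.
move=> u_cauchy.
have [a ua] := cauchy_additive_dominated normr_Re_le_cabs ReB u_cauchy.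
have [b ub] := cauchy_additive_dominated normr_Im_le_cabs ImB u_cauchy.
exists (Complex a b) => eps eps_gt0.
have [Ka uKa] := ua _ (divr_gt0 eps_gt0 (ltr0Sn _ 1)).
have [Kb uKb] := ub _ (divr_gt0 eps_gt0 (ltr0Sn _ 1)).
exists (maxn Ka Kb) => n; rewrite geq_max => /andP [/uKa lt_a /uKb lt_b].
apply: le_lt_trans (cabs_le_normr_ReIm _) _.
by rewrite ReB ImB (splitr eps) ltrD.
Qed.

Definition CCalg : CstarAlg.
Proof.
refine (@Build_CstarAlg (CC^o) (@GRing.mul CC) (@conjc RR) cabs
  _ _ _ _ (@conjcK RR) _ cabs_eq0 cabsD cabsM _ cabs_conjM CC_complete).
- by move=> x y z; rewrite mulrA.
- by move=> a x y z; rewrite /= mulrDl -mulrA.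
- by move=> a x y z; rewrite /= mulrDr mulrCA.
- by move=> a x y; rewrite /= rmorphD rmorphM.
- by move=> x y; rewrite rmorphM mulrC.
- by move=> x y; rewrite cabsM.
Defined.

Lemma eq0_of_addr_idem (V : zmodType) (x : V) : x = x + x -> x = 0.
Proof. by move=> xx; apply: (@addrI _ x); rewrite addr0 -xx. Qed.

Lemma ca_mul0l (A : CstarAlg) (x : A) : ca_mul 0 x = 0.
Proof.
by apply: eq0_of_addr_idem; have := ca_mul_linl 1 (0 : A) 0 x; rewrite !scale1r addr0.
Qed.

Lemma ca_mul0r (A : CstarAlg) (x : A) : ca_mul x 0 = 0.
Proof.
by apply: eq0_of_addr_idem; have := ca_mul_linr 1 (0 : A) 0 x; rewrite !scale1r addr0.
Qed.

Lemma star_hom0 (A B : CstarAlg) (Phi : A -> B) : is_star_hom Phi -> Phi 0 = 0.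
Proof.
by case=> Phi_lin _; apply: eq0_of_addr_idem; have := Phi_lin 1 0 0; rewrite !scale1r addr0.
Qed.

Definition range_proj (A : CstarAlg) (x : A) : A := ca_mul x (ca_star x).

Lemma star_hom_range_proj (A B : CstarAlg) (Phi : A -> B) (x : A) :
  is_star_hom Phi -> Phi (range_proj x) = range_proj (Phi x).
Proof. by case=> _ [PhiM Phi_star]; rewrite /range_proj PhiM Phi_star. Qed.

Section ToeplitzRepresentation.
Variables (M : Type) (mul : M -> M -> M) (e : M) (A : CstarAlg) (t : M -> A).
Hypothesis tTC : is_TC_rep mul e t.

Lemma TC_rep_disjoint c1 c2 :
  (forall z, ~ (in_rideal mul c1 z /\ in_rideal mul c2 z)) ->
  ca_mul (range_proj (t c1)) (range_proj (t c2)) = 0.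
Proof.
move=> disj; have [_ [_ tF]] := tTC.
have indep0 : independent mul [::] by move=> ? ? [].
have meet0 z : (in_rideal mul c1 z /\ in_rideal mul c2 z) <->
    exists f, List.In f [::] /\ in_rideal mul f z.
  by split=> [/disj [] | [? []]].
by have [_ ->] := tF c1 c2 [::] indep0 meet0.
Qed.

Hypothesis mul1x : forall x, mul e x = x.

Lemma TC_rep_adj_mul c y : ca_mul (ca_star (t c)) (t (mul c y)) = t y.
Proof. by have [tM [tK _]] := tTC; rewrite -tM ca_mulA tK tM mul1x. Qed.

Lemma TC_rep_range_proj_mul c y :
  ca_mul (range_proj (t c)) (t (mul c y)) = t (mul c y).
Proof. by have [tM _] := tTC; rewrite -ca_mulA TC_rep_adj_mul tM. Qed.

Lemma TC_rep_common_multiple c1 c2 y1 y2 :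
  ca_mul (range_proj (t c1)) (range_proj (t c2)) = 0 -> mul c1 y1 = mul c2 y2 ->
  t y1 = 0.
Proof.
move=> orth eq_y.
rewrite -(TC_rep_adj_mul c1) -TC_rep_range_proj_mul eq_y -TC_rep_range_proj_mul.
by rewrite (ca_mulA (range_proj _)) orth ca_mul0l ca_mul0r.
Qed.

End ToeplitzRepresentation.

Lemma range_proj_CC1 : range_proj (1 : CCalg) = 1.
Proof. by rewrite /range_proj /= mul1r oppr0. Qed.

Lemma TC_rep_const1 (M : Type) (mul : M -> M -> M) (e : M) :
  (forall c1 c2, exists z, in_rideal mul c1 z /\ in_rideal mul c2 z) ->
  is_TC_rep mul e (fun _ => 1 : CCalg).
Proof.
move=> meet; split; first by move=> *; rewrite /= mulr1.
split=> [c | c1 c2 F _ I_F q]; first by rewrite /= mulr1 oppr0.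
rewrite {}/q; cbv beta; fold (range_proj (1 : CCalg)); rewrite range_proj_CC1.
split=> [f g _ _ | ]; first by rewrite /= mulrC.
have [z /I_F [f [+ _]]] := meet c1 c2; case: F {I_F} => [[] | g F _] /=.
by rewrite /pjoin /= !mul1r addrK.
Qed.

Lemma universal_TC_neq0 (M : Type) (mul : M -> M -> M) (e : M)
    (B : CstarAlg) (s : M -> B) :
  (forall c1 c2, exists z, in_rideal mul c1 z /\ in_rideal mul c2 z) ->
  is_universal_TC mul e s -> forall m, s m <> 0.
Proof.
move=> meet [_ univ] m sm0.
have [[phi [phi_hom phi_s]] _] := univ _ _ (TC_rep_const1 e meet).
by have := phi_s m; rewrite sm0 (star_hom0 phi_hom) => /esym/eqP; rewrite oner_eq0.
Qed.

End CstarAlgebras.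

Theorem mainTheorem13 :
  matched_pair F2mul F2e Nmul Ne ex_lact ex_ract /\
  (is_monoid Xmul Xe /\ left_cancellative Xmul /\ finitely_aligned Xmul) /\
  ~ concordant F2mul Xmul Xincl /\
  (forall (A : CstarAlg) (t : F2p -> A) (B : CstarAlg) (s : Xt -> B),
     is_universal_TC F2mul F2e t ->
     is_universal_TC Xmul Xe s ->
     ~ exists Phi : A -> B, is_star_hom Phi /\ forall w, Phi (t w) = s (Xincl w)).
Proof.
split; first exact: matched_pair_F2_N.
split; first by split; [exact: Xmonoid | split; [exact: Xleft_cancellative | exact: Xfinitely_aligned]].
split; first exact: Xnot_concordant.
move=> A t B s [tTC _] sU [Phi [Phi_hom Phi_t]].
have [_ [PhiM _]] := Phi_hom.
have orth_ab := congr1 Phi (TC_rep_disjoint tTC F2_letters_disjoint).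
rewrite PhiM !(star_hom_range_proj _ Phi_hom) !Phi_t (star_hom0 Phi_hom) in orth_ab.
have mul1x : forall x, Xmul Xe x = x by have [_ []] := Xmonoid.
apply: (universal_TC_neq0 Xideals_meet sU (m := (1%N, [::]))).
by apply: (TC_rep_common_multiple sU.1 mul1x orth_ab (y2 := (1%N, [::]))).
Qed.
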